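(* Fix $\mathbf{W}>0$ and $f>0$ and consider the tree–grass ODE system \[ \frac{dG}{dt}=g_G(\mathbf{W})G\Big(1-\frac{G}{K_G(\mathbf{W})}\Big)-\delta_G G-\eta_{TG}TG-\lambda_{fG}fG,\qquad \frac{dT}{dt}=g_T(\mathbf{W})T\Big(1-\frac{T}{K_T(\mathbf{W})}\Big)-\delta_T T-f\vartheta(T)\omega(G)T . \] Then: (1) The desert equilibrium $\mathbf{E}_0=(0,0)$ is locally asymptotically stable when $\mathcal{R}^1_{\mathbf{W}}<1$ and $\mathcal{R}^2_{\mathbf{W}}<1$. (2) The grassland equilibrium $\mathbf{E}_G=(G^*,0)$ (which exists when $\mathcal{R}^2_{\mathbf{W}}>1$) is locally asymptotically stable when $\mathcal{R}_G<1$. (3) The forest equilibrium $\mathbf{E}_F=(0,T^* )$ (which exists when $\mathcal{R}^1_{\mathbf{W}}>1$) is locally asymptotically stable when $\mathcal{R}_F<1$.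
   Context: All parameters $\gamma_G,\gamma_T,b_G,b_T,c_G,c_T,d_G,d_T,a_G,a_T,\delta_G,\delta_T,\eta_{TG},\lambda_{fG},\lambda_{fT}^{min},\lambda_{fT}^{max},p,\alpha$ are positive constants, $\lambda_{fT}^{min}<\lambda_{fT}^{max}$. $g_G(\mathbf{W})=\frac{\gamma_G\mathbf{W}}{b_G+\mathbf{W}}$, $g_T(\mathbf{W})=\frac{\gamma_T\mathbf{W}}{b_T+\mathbf{W}}$, $K_G(\mathbf{W})=\frac{c_G}{1+d_Ge^{-a_G\mathbf{W}}}$, $K_T(\mathbf{W})=\frac{c_T}{1+d_Te^{-a_T\mathbf{W}}}$, $\omega(G)=\frac{G^2}{G^2+\alpha^2}$, $\vartheta(T)=\lambda_{fT}^{min}+(\lambda_{fT}^{max}-\lambda_{fT}^{min})e^{-pT}$. Thresholds: $\mathcal{R}^1_{\mathbf{W}}=g_T(\mathbf{W})/\delta_T$, $\mathcal{R}^2_{\mathbf{W}}=g_G(\mathbf{W})/(\delta_G+\lambda_{fG}f)$, $T^*=K_T(\mathbf{W})(1-1/\mathcal{R}^1_{\mathbf{W}})$, $G^*=K_G(\mathbf{W})(1-1/\mathcal{R}^2_{\mathbf{W}})$, $\mathcal{R}_F=\frac{g_G(\mathbf{W})}{\eta_{TG}T^*+\delta_G+\lambda_{fG}f}$, $\mathcal{R}_G=\frac{g_T(\mathbf{W})}{\delta_T+\lambda_{fT}^{max}f\omega(G^* )}$. *)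

From Stdlib Require Import Reals.
Open Scope R_scope.

Record params := Params {
  gammaG : R; gammaT : R; bG : R; bT : R; cG : R; cT : R;
  dG : R; dT : R; aG : R; aT : R; deltaG : R; deltaT : R;
  etaTG : R; lamfG : R; lamfTmin : R; lamfTmax : R; pp : R; alpha : R }.

Definition params_pos (p : params) : Prop :=
  0 < gammaG p /\ 0 < gammaT p /\ 0 < bG p /\ 0 < bT p /\ 0 < cG p /\
  0 < cT p /\ 0 < dG p /\ 0 < dT p /\ 0 < aG p /\ 0 < aT p /\
  0 < deltaG p /\ 0 < deltaT p /\ 0 < etaTG p /\ 0 < lamfG p /\
  0 < lamfTmin p /\ 0 < lamfTmax p /\ 0 < pp p /\ 0 < alpha p /\
  lamfTmin p < lamfTmax p.

Definition g_G (p : params) (W : R) : R := gammaG p * W / (bG p + W).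
Definition g_T (p : params) (W : R) : R := gammaT p * W / (bT p + W).
Definition K_G (p : params) (W : R) : R := cG p / (1 + dG p * exp (- aG p * W)).
Definition K_T (p : params) (W : R) : R := cT p / (1 + dT p * exp (- aT p * W)).
Definition omega (p : params) (G : R) : R := G ^ 2 / (G ^ 2 + alpha p ^ 2).
Definition vartheta (p : params) (T : R) : R :=
  lamfTmin p + (lamfTmax p - lamfTmin p) * exp (- pp p * T).

Definition F_G (p : params) (W f G T : R) : R :=
  g_G p W * G * (1 - G / K_G p W) - deltaG p * G - etaTG p * T * G
  - lamfG p * f * G.
Definition F_T (p : params) (W f G T : R) : R :=
  g_T p W * T * (1 - T / K_T p W) - deltaT p * T
  - f * vartheta p T * omega p G * T.

Definition R1W (p : params) (W : R) : R := g_T p W / deltaT p.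
Definition R2W (p : params) (W f : R) : R := g_G p W / (deltaG p + lamfG p * f).
Definition Tstar (p : params) (W : R) : R := K_T p W * (1 - 1 / R1W p W).
Definition Gstar (p : params) (W f : R) : R := K_G p W * (1 - 1 / R2W p W f).
Definition R_F (p : params) (W f : R) : R :=
  g_G p W / (etaTG p * Tstar p W + deltaG p + lamfG p * f).
Definition R_G (p : params) (W f : R) : R :=
  g_T p W / (deltaT p + lamfTmax p * f * omega p (Gstar p W f)).

Definition is_solution (p : params) (W f : R) (G T : R -> R) : Prop :=
  (forall t, 0 < t ->
     derivable_pt_lim G t (F_G p W f (G t) (T t)) /\
     derivable_pt_lim T t (F_T p W f (G t) (T t))) /\
  (forall eps, 0 < eps -> exists d, 0 < d /\ forall s, 0 <= s < d ->
     Rabs (G s - G 0) < eps /\ Rabs (T s - T 0) < eps).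

Definition is_equilibrium (p : params) (W f Ge Te : R) : Prop :=
  F_G p W f Ge Te = 0 /\ F_T p W f Ge Te = 0.

(* Local asymptotic stability (Lyapunov stability + local attractivity),
   distances measured in the max-norm on R^2. *)
Definition loc_asym_stable (p : params) (W f Ge Te : R) : Prop :=
  (forall eps, 0 < eps -> exists d, 0 < d /\
     forall G T, is_solution p W f G T ->
       Rabs (G 0 - Ge) < d -> Rabs (T 0 - Te) < d ->
       forall t, 0 <= t -> Rabs (G t - Ge) < eps /\ Rabs (T t - Te) < eps) /\
  (exists d0, 0 < d0 /\
     forall G T, is_solution p W f G T ->
       Rabs (G 0 - Ge) < d0 -> Rabs (T 0 - Te) < d0 ->
       forall eps, 0 < eps -> exists t0, forall t, t0 <= t ->
         Rabs (G t - Ge) < eps /\ Rabs (T t - Te) < eps).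

From Stdlib Require Import Reals Lra Classical.
Open Scope R_scope.

(* Each equilibrium E admits a weighted quadratic Lyapunov function
   V = A (G - G_E)^2 + B (T - T_E)^2 with V' <= -k V on a small square around E.
   Write each component of the vector field as a per-capita rate times the
   population.  The threshold hypothesis says that the species absent at E has a
   negative invasion rate, and logistic crowding gives the species present a
   restoring rate; all other couplings are O(r) times a squared deviation, hence
   absorbed on a square of small side r.  The exception is the competition term
   -eta T G at E_G, which is split by AM-GM and absorbed by giving the trees a
   large weight B.  A comparison argument (real induction on the time at which
   V leaves a sublevel set) then gives V(t) <= V(s) e^(-k (t - s)), which yields
   both Lyapunov stability and attractivity. *)

(** * Comparison principle *)

Lemma real_induction (s : R) (P : R -> Prop) :
  (forall t, s <= t -> (forall u, s <= u < t -> P u) -> P t) ->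
  (forall t, s <= t -> P t -> exists d, 0 < d /\ forall u, t < u < t + d -> P u) ->
  forall t, s <= t -> P t.
Proof.
  intros closed open t1 Ht1. apply NNPP; intro notP1.
  set (E := fun t => s <= t /\ forall u, s <= u <= t -> P u).
  assert (E_bound : bound E).
  { exists t1; intros t [_ Ht]. apply Rnot_lt_le; intro. apply notP1, Ht; lra. }
  assert (Ps : P s) by (apply closed; [lra | intros; lra]).
  assert (Es : E s) by (split; [lra | intros u Hu; replace u with s by lra; exact Ps]).
  destruct (completeness E E_bound (ex_intro _ s Es)) as [tau [tau_ub tau_lub]].
  assert (s_le_tau : s <= tau) by (apply tau_ub, Es).
  assert (P_before : forall u, s <= u < tau -> P u).
  { intros u Hu. apply NNPP; intro notPu.
    assert (tau <= u); [|lra].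
    apply tau_lub; intros t [_ Ht]. apply Rnot_lt_le; intro. apply notPu, Ht; lra. }
  assert (Ptau : P tau) by (apply closed; assumption).
  destruct (open tau s_le_tau Ptau) as [d [Hd P_after]].
  assert (E_after : E (tau + d / 2)); [|specialize (tau_ub _ E_after); lra].
  split; [lra|]. intros u Hu.
  destruct (Rtotal_order u tau) as [Hlt | [-> | Hgt]].
  - apply P_before; lra.
  - exact Ptau.
  - apply P_after; lra.
Qed.

Lemma derivable_pt_lim_lt_near (V : R -> R) t l c :
  derivable_pt_lim V t l -> V t < c ->
  exists d, 0 < d /\ forall u, Rabs (u - t) < d -> V u < c.
Proof.
  intros HV Hc.
  destruct (derivable_continuous_pt V t (exist _ l HV) (c - V t)) as [d [Hd Hnear]]; [lra|].
  exists d; split; [exact Hd|]. intros u Hu.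
  destruct (Req_dec u t) as [-> | Hne]; [exact Hc|].
  assert (Hdist : Rabs (V u - V t) < c - V t)
    by (apply Hnear; split; [split; [exact I | congruence] | exact Hu]).
  apply Rabs_def2 in Hdist; lra.
Qed.

Lemma exp_le_1 x : x <= 0 -> exp x <= 1.
Proof.
  intros Hx. rewrite <- exp_0.
  destruct (Req_dec x 0) as [-> | Hne]; [lra | left; apply exp_increasing; lra].
Qed.

Lemma derivable_pt_lim_exp_scal k s u :
  derivable_pt_lim (fun u => exp (k * (u - s))) u (k * exp (k * (u - s))).
Proof.
  assert (Haff : derivable_pt_lim (fun u => k * (u - s)) u k).
  { pose proof (derivable_pt_lim_minus id (fct_cte s) u 1 0
      (derivable_pt_lim_id u) (derivable_pt_lim_const s u)) as Hlin.
    pose proof (derivable_pt_lim_scal _ k u _ Hlin) as Hscal.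
    rewrite Rminus_0_r, Rmult_1_r in Hscal. exact Hscal. }
  rewrite Rmult_comm.
  exact (derivable_pt_lim_comp _ exp u _ _ Haff (derivable_pt_lim_exp _)).
Qed.

Lemma exp_decay_of_derivative (V V' : R -> R) k s t :
  s <= t ->
  (forall u, s <= u <= t -> derivable_pt_lim V u (V' u)) ->
  (forall u, s < u < t -> V' u <= - k * V u) ->
  V t <= V s * exp (- k * (t - s)).
Proof.
  intros Hst HV HV'.
  set (Z := fun u => V u * exp (k * (u - s))).
  assert (Z_le : Z t <= Z s).
  { destruct (Req_dec s t) as [-> | Hne]; [lra|].
    destruct (MVT_cor2 Z (fun u => (V' u + k * V u) * exp (k * (u - s))) s t)
      as [c [HZ Hc]]; [lra | |].
    - intros u Hu. unfold Z.
      replace ((V' u + k * V u) * exp (k * (u - s)))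
        with (V' u * exp (k * (u - s)) + V u * (k * exp (k * (u - s)))) by ring.
      apply (derivable_pt_lim_mult V (fun u => exp (k * (u - s))));
        [apply HV; lra | apply derivable_pt_lim_exp_scal].
    - pose proof (HV' c Hc). pose proof (exp_pos (k * (c - s))).
      assert ((V' c + k * V c) * exp (k * (c - s)) <= 0) by nra. nra. }
  unfold Z in Z_le. rewrite Rminus_diag, Rmult_0_r, exp_0, Rmult_1_r in Z_le.
  replace (- k * (t - s)) with (- (k * (t - s))) by ring.
  rewrite exp_Ropp.
  pose proof (exp_pos (k * (t - s))).
  apply (Rmult_le_reg_r (exp (k * (t - s)))); [lra|].
  rewrite Rmult_assoc, Rinv_l, Rmult_1_r; lra.
Qed.

Lemma exp_decay_below (V V' : R -> R) k c s :
  0 <= k ->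
  (forall t, s <= t -> derivable_pt_lim V t (V' t)) ->
  (forall t, s <= t -> 0 <= V t) ->
  (forall t, s <= t -> V t < c -> V' t <= - k * V t) ->
  V s < c ->
  forall t, s <= t -> V t <= V s * exp (- k * (t - s)).
Proof.
  intros Hk HV Hpos HV' Hs.
  assert (decay : forall t, s <= t -> (forall u, s < u < t -> V u < c) ->
                  V t <= V s * exp (- k * (t - s))).
  { intros t Ht Hbelow. apply (exp_decay_of_derivative V V'); [exact Ht | |].
    - intros u Hu; apply HV; lra.
    - intros u Hu; apply HV'; [lra | apply Hbelow, Hu]. }
  assert (below : forall t, s <= t -> V t < c).
  { apply real_induction.
    - intros t Ht Hbelow.
      assert (exp (- k * (t - s)) <= 1).
      { apply exp_le_1. nra. }
      pose proof (decay t Ht (fun u Hu => Hbelow u ltac:(lra))).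
      pose proof (Hpos s (Rle_refl s)). nra.
    - intros t Ht Hc.
      destruct (derivable_pt_lim_lt_near V t _ c (HV t Ht) Hc) as [d [Hd Hnear]].
      exists d; split; [exact Hd|]. intros u Hu. apply Hnear, Rabs_def1; lra. }
  intros t Ht. apply decay; [exact Ht|]. intros u Hu; apply below; lra.
Qed.

Lemma exp_decay_lt a b k s t :
  0 <= a -> 0 < b -> 0 < k -> s + a / (k * b) <= t ->
  a * exp (- k * (t - s)) < b.
Proof.
  intros Ha Hb Hk Ht.
  assert (a / b <= k * (t - s)).
  { apply (Rmult_le_reg_r (/ k)); [apply Rinv_0_lt_compat; lra|].
    replace (k * (t - s) * / k) with (t - s) by (field; lra).
    replace (a / b * / k) with (a / (k * b)) by (field; lra). lra. }
  assert (a < b * exp (k * (t - s))).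
  { pose proof (exp_ineq1_le (k * (t - s))).
    assert (a = b * (a / b)) by (field; lra). nra. }
  replace (- k * (t - s)) with (- (k * (t - s))) by ring.
  rewrite exp_Ropp. pose proof (exp_pos (k * (t - s))).
  apply (Rmult_lt_reg_r (exp (k * (t - s)))); [lra|].
  rewrite Rmult_assoc, Rinv_l, Rmult_1_r; lra.
Qed.

(** * Quadratic Lyapunov functions *)

Lemma Rabs_lt_of_sqr_lt x e : 0 < e -> x * x < e * e -> Rabs x < e.
Proof. intros He Hx. apply Rabs_def1; nra. Qed.

Lemma derivable_pt_lim_weighted_sqr (X : R -> R) a c t l :
  derivable_pt_lim X t l ->
  derivable_pt_lim (fun t => a * ((X t - c) * (X t - c))) t (2 * a * (X t - c) * l).
Proof.
  intros HX.
  pose proof (derivable_pt_lim_minus X (fct_cte c) t l 0 HX (derivable_pt_lim_const c t))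
    as Hdiff.
  replace (2 * a * (X t - c) * l)
    with (a * ((l - 0) * (X t - c) + (X t - c) * (l - 0))) by ring.
  exact (derivable_pt_lim_scal _ a t _ (derivable_pt_lim_mult _ _ t _ _ Hdiff Hdiff)).
Qed.

Definition quadratic_lyapunov (p : params) (W f Ge Te A B r k : R) : Prop :=
  0 < A /\ 0 < B /\ 0 < r /\ 0 < k /\
  forall G T, Rabs (G - Ge) < r -> Rabs (T - Te) < r ->
    2 * A * (G - Ge) * F_G p W f G T + 2 * B * (T - Te) * F_T p W f G T
    <= - k * (A * ((G - Ge) * (G - Ge)) + B * ((T - Te) * (T - Te))).

Section Lyapunov.
Variables (p : params) (W f Ge Te A B r k : R).
Hypothesis Hlyap : quadratic_lyapunov p W f Ge Te A B r k.

Let V (G T : R) := A * ((G - Ge) * (G - Ge)) + B * ((T - Te) * (T - Te)).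
Let m := Rmin A B.
(* Solutions are only known to be right-continuous at 0 and to solve the ODE for
   t > 0, so the decay estimate starts at a small time s > 0; [radius e] is
   chosen so that V (s) < m e^2 for such s. *)
Let radius (e : R) := m * e / (4 * (A + B)).

Let HA : 0 < A. Proof. apply Hlyap. Qed.
Let HB : 0 < B. Proof. apply Hlyap. Qed.
Let Hm : 0 < m. Proof. apply Rmin_pos; [exact HA | exact HB]. Qed.

Lemma lyap_nonneg G T : 0 <= V G T.
Proof.
  pose proof (Rle_0_sqr (G - Ge)). pose proof (Rle_0_sqr (T - Te)).
  unfold V, Rsqr in *. nra.
Qed.

Lemma near_of_lyap_lt G T e : 0 < e -> V G T < m * (e * e) ->
  Rabs (G - Ge) < e /\ Rabs (T - Te) < e.
Proof.
  intros He HV. unfold V in HV.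
  assert (m <= A) by apply Rmin_l. assert (m <= B) by apply Rmin_r.
  pose proof (Rle_0_sqr (G - Ge)). pose proof (Rle_0_sqr (T - Te)). unfold Rsqr in *.
  assert (m * ((G - Ge) * (G - Ge)) <= A * ((G - Ge) * (G - Ge))) by nra.
  assert (m * ((T - Te) * (T - Te)) <= B * ((T - Te) * (T - Te))) by nra.
  split; apply Rabs_lt_of_sqr_lt; nra.
Qed.

Lemma lyap_le_of_near G T d : Rabs (G - Ge) < d -> Rabs (T - Te) < d ->
  V G T <= (A + B) * (d * d).
Proof.
  intros HG HT. apply Rabs_def2 in HG. apply Rabs_def2 in HT. unfold V.
  assert ((G - Ge) * (G - Ge) <= d * d) by nra.
  assert ((T - Te) * (T - Te) <= d * d) by nra.
  nra.
Qed.

Lemma lyap_decays G T s : is_solution p W f G T -> 0 < s ->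
  V (G s) (T s) < m * (r * r) ->
  forall t, s <= t -> V (G t) (T t) <= V (G s) (T s) * exp (- k * (t - s)).
Proof.
  intros [Hder _] Hs HVs.
  destruct Hlyap as (_ & _ & Hr & Hk & Hdiss).
  apply (exp_decay_below (fun t => V (G t) (T t))
    (fun t => 2 * A * (G t - Ge) * F_G p W f (G t) (T t)
            + 2 * B * (T t - Te) * F_T p W f (G t) (T t)) k (m * (r * r)));
    [lra | | intros; apply lyap_nonneg | | exact HVs].
  - intros t Ht. destruct (Hder t ltac:(lra)) as [HGt HTt].
    apply (derivable_pt_lim_plus (fun t => A * ((G t - Ge) * (G t - Ge)))
                                 (fun t => B * ((T t - Te) * (T t - Te))));
      apply derivable_pt_lim_weighted_sqr; assumption.
  - intros t _ HVt. destruct (near_of_lyap_lt _ _ r Hr HVt). apply Hdiss; assumption.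
Qed.

Lemma solution_enters_sublevel G T e : is_solution p W f G T -> 0 < e ->
  Rabs (G 0 - Ge) < radius e -> Rabs (T 0 - Te) < radius e ->
  exists s, 0 < s /\
    (forall t, 0 <= t <= s -> Rabs (G t - Ge) < e /\ Rabs (T t - Te) < e) /\
    V (G s) (T s) < m * (e * e).
Proof.
  intros [_ Hcont] He HG0 HT0.
  assert (Hm_le : m <= A) by apply Rmin_l.
  assert (Hrad : 0 < radius e) by (unfold radius; apply Rdiv_lt_0_compat; nra).
  assert (Hrad_le : radius e <= e / 4).
  { unfold radius. apply (Rmult_le_reg_r (4 * (A + B))); [lra|].
    unfold Rdiv. rewrite Rmult_assoc, Rinv_l by lra. nra. }
  destruct (Hcont _ Hrad) as [d [Hd Hnear0]].
  assert (Hnear : forall t, 0 <= t < d ->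
            Rabs (G t - Ge) < 2 * radius e /\ Rabs (T t - Te) < 2 * radius e).
  { intros t Ht. destruct (Hnear0 t Ht) as [HG HT].
    split; [ replace (G t - Ge) with ((G t - G 0) + (G 0 - Ge)) by ring
           | replace (T t - Te) with ((T t - T 0) + (T 0 - Te)) by ring ];
      eapply Rle_lt_trans; try apply Rabs_triang; lra. }
  exists (d / 2). split; [lra | split].
  - intros t Ht. destruct (Hnear t ltac:(lra)). split; lra.
  - destruct (Hnear (d / 2) ltac:(lra)) as [HG HT].
    pose proof (lyap_le_of_near _ _ _ HG HT).
    assert ((A + B) * (2 * radius e * (2 * radius e)) = m * e * radius e)
      by (unfold radius; field; lra).
    assert (m * e * radius e < m * (e * e)).
    { rewrite Rmult_assoc. apply Rmult_lt_compat_l; [lra|]. nra. }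
    lra.
Qed.

Lemma loc_asym_stable_of_lyapunov : loc_asym_stable p W f Ge Te.
Proof.
  assert (Hr : 0 < r) by apply Hlyap.
  assert (Hk : 0 < k) by apply Hlyap.
  assert (Hrad : forall e, 0 < e -> 0 < radius e).
  { intros e He. unfold radius. apply Rdiv_lt_0_compat; nra. }
  split.
  - intros eps Heps.
    set (e := Rmin eps r).
    assert (He : 0 < e) by (apply Rmin_pos; lra).
    assert (e <= eps) by apply Rmin_l. assert (e <= r) by apply Rmin_r.
    exists (radius e). split; [apply Hrad, He|].
    intros G T Hsol HG0 HT0 t Ht.
    destruct (solution_enters_sublevel G T e Hsol He HG0 HT0) as (s & Hs & Hearly & HVs).
    destruct (Rle_lt_dec t s) as [Hts | Hst].
    + destruct (Hearly t ltac:(lra)). split; lra.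
    + assert (HVt : V (G t) (T t) < m * (e * e)).
      { assert (m * (e * e) <= m * (r * r)) by (apply Rmult_le_compat_l; nra).
        pose proof (lyap_decays G T s Hsol Hs ltac:(lra) t ltac:(lra)).
        pose proof (exp_le_1 (- k * (t - s)) ltac:(nra)).
        pose proof (lyap_nonneg (G s) (T s)). nra. }
      destruct (near_of_lyap_lt _ _ e He HVt). split; lra.
  - exists (radius r). split; [apply Hrad, Hr|].
    intros G T Hsol HG0 HT0 eps Heps.
    destruct (solution_enters_sublevel G T r Hsol Hr HG0 HT0) as (s & Hs & _ & HVs).
    set (Vs := V (G s) (T s)) in *.
    assert (Hmeps : 0 < m * (eps * eps)) by (apply Rmult_lt_0_compat; nra).
    exists (s + Vs / (k * (m * (eps * eps)))). intros t Ht.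
    assert (Ht_s : s <= t).
    { assert (0 <= Vs / (k * (m * (eps * eps)))); [|lra].
      apply Rmult_le_pos; [apply lyap_nonneg |].
      left; apply Rinv_0_lt_compat, Rmult_lt_0_compat; assumption. }
    apply near_of_lyap_lt; [exact Heps|].
    eapply Rle_lt_trans; [apply (lyap_decays G T s Hsol Hs HVs t Ht_s)|].
    apply exp_decay_lt; [apply lyap_nonneg | exact Hmeps | exact Hk | exact Ht].
Qed.

End Lyapunov.

Arguments loc_asym_stable_of_lyapunov {p W f Ge Te A B r k}.

(** * The tree-grass vector field *)

Ltac params_facts Hp :=
  let H := fresh in pose proof Hp as H; unfold params_pos in H; decompose [and] H; clear H.

Lemma div_lt_1_iff a b : 0 < b -> (a / b < 1 <-> a < b).
Proof.
  intros Hb. replace a with (a / b * b) at 2 by (field; lra).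
  split; intros Hab; nra.
Qed.

Lemma one_lt_div_iff a b : 0 < b -> (1 < a / b <-> b < a).
Proof.
  intros Hb. replace a with (a / b * b) at 2 by (field; lra).
  split; intros Hab; nra.
Qed.

Lemma logistic_equilibrium g K D : 0 < K -> 0 < D -> 1 < g / D ->
  0 < K * (1 - 1 / (g / D)) /\ g - g / K * (K * (1 - 1 / (g / D))) = D.
Proof.
  intros HK HD Hg. apply (one_lt_div_iff g D HD) in Hg.
  replace (1 - 1 / (g / D)) with ((g - D) / g) by (field; lra).
  split.
  - apply Rmult_lt_0_compat; [exact HK | apply Rdiv_lt_0_compat; lra].
  - field; lra.
Qed.

Definition crowdG (p : params) (W : R) : R := g_G p W / K_G p W.
Definition crowdT (p : params) (W : R) : R := g_T p W / K_T p W.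

Section Model.
Variables (p : params) (W f : R).
Hypotheses (Hp : params_pos p) (HW : 0 < W).

Lemma g_G_pos : 0 < g_G p W.
Proof. params_facts Hp. apply Rdiv_lt_0_compat; nra. Qed.

Lemma g_T_pos : 0 < g_T p W.
Proof. params_facts Hp. apply Rdiv_lt_0_compat; nra. Qed.

Lemma K_G_pos : 0 < K_G p W.
Proof.
  params_facts Hp.
  pose proof (exp_pos (- aG p * W)). apply Rdiv_lt_0_compat; nra.
Qed.

Lemma K_T_pos : 0 < K_T p W.
Proof.
  params_facts Hp.
  pose proof (exp_pos (- aT p * W)). apply Rdiv_lt_0_compat; nra.
Qed.

Lemma crowdG_pos : 0 < crowdG p W.
Proof. apply Rdiv_lt_0_compat; [apply g_G_pos | apply K_G_pos]. Qed.

Lemma crowdT_pos : 0 < crowdT p W.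
Proof. apply Rdiv_lt_0_compat; [apply g_T_pos | apply K_T_pos]. Qed.

Lemma F_G_factor G T : F_G p W f G T =
  G * (g_G p W - deltaG p - lamfG p * f - etaTG p * T - crowdG p W * G).
Proof. pose proof K_G_pos. unfold F_G, crowdG. field. lra. Qed.

Lemma F_T_factor G T : F_T p W f G T =
  T * (g_T p W - deltaT p - crowdT p W * T - f * vartheta p T * omega p G).
Proof. pose proof K_T_pos. unfold F_T, crowdT. field. lra. Qed.

End Model.

Lemma omega_0 p : omega p 0 = 0.
Proof. unfold omega, Rdiv. ring. Qed.

Section Saturations.
Variable p : params.
Hypothesis Hp : params_pos p.

Let alpha2_pos : 0 < alpha p * alpha p.
Proof. params_facts Hp. nra. Qed.

Lemma omega_nonneg G : 0 <= omega p G.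
Proof.
  unfold omega. simpl. pose proof (Rle_0_sqr G). unfold Rsqr in *.
  apply Rmult_le_pos; [nra | left; apply Rinv_0_lt_compat; nra].
Qed.

Lemma omega_le_1 G : omega p G <= 1.
Proof.
  unfold omega. simpl. pose proof (Rle_0_sqr G). unfold Rsqr in *.
  left. apply div_lt_1_iff; nra.
Qed.

Lemma omega_le_sqr G : omega p G <= G * G / (alpha p * alpha p).
Proof.
  unfold omega. simpl. rewrite !Rmult_1_r. pose proof (Rle_0_sqr G) as HG. unfold Rsqr in *.
  unfold Rdiv. apply Rmult_le_compat_l; [exact HG|].
  apply Rinv_le_contravar; nra.
Qed.

Lemma omega_sub_le a b :
  omega p a - omega p b <= Rabs (a * a - b * b) / (alpha p * alpha p).
Proof.
  unfold omega. simpl. rewrite !Rmult_1_r.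
  pose proof (Rle_0_sqr a). pose proof (Rle_0_sqr b). unfold Rsqr in *.
  set (q := alpha p * alpha p) in *.
  replace (a * a / (a * a + q) - b * b / (b * b + q))
    with ((a * a - b * b) * (q / ((a * a + q) * (b * b + q)))) by (field; lra).
  assert (Hfrac : 0 <= q / ((a * a + q) * (b * b + q)) <= / q).
  { split.
    - apply Rmult_le_pos; [lra | left; apply Rinv_0_lt_compat; nra].
    - replace (/ q) with (q / (q * q)) by (field; lra).
      unfold Rdiv. apply Rmult_le_compat_l; [lra|]. apply Rinv_le_contravar; nra. }
  pose proof (Rle_abs (a * a - b * b)). pose proof (Rabs_pos (a * a - b * b)).
  unfold Rdiv. nra.
Qed.

Lemma vartheta_pos T : 0 < vartheta p T.
Proof. params_facts Hp. pose proof (exp_pos (- pp p * T)). unfold vartheta. nra. Qed.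

Lemma vartheta_le_max T : 0 <= T -> vartheta p T <= lamfTmax p.
Proof.
  intros HT. params_facts Hp.
  pose proof (exp_le_1 (- pp p * T) ltac:(nra)). unfold vartheta. nra.
Qed.

Lemma vartheta_ge_max_sub T :
  lamfTmax p - (lamfTmax p - lamfTmin p) * pp p * Rabs T <= vartheta p T.
Proof.
  params_facts Hp. unfold vartheta.
  pose proof (exp_ineq1_le (- pp p * T)).
  pose proof (Rle_abs T). pose proof (Rle_abs (- T)). rewrite Rabs_Ropp in *.
  assert (1 - pp p * Rabs T <= exp (- pp p * T)) by nra.
  nra.
Qed.

Lemma fire_rate_bounds G T : 0 <= T ->
  0 <= vartheta p T * omega p G <= lamfTmax p * (G * G / (alpha p * alpha p)).
Proof.
  intros HT.
  pose proof (vartheta_pos T). pose proof (vartheta_le_max T HT).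
  pose proof (omega_nonneg G). pose proof (omega_le_sqr G).
  split; [apply Rmult_le_pos; lra | apply Rmult_le_compat; lra].
Qed.

Definition fire_rate_lipschitz (Gs : R) : R :=
  (lamfTmax p - lamfTmin p) * pp p + lamfTmax p * (3 * Gs) / (alpha p * alpha p).

Lemma fire_rate_lipschitz_pos Gs : 0 < Gs -> 0 < fire_rate_lipschitz Gs.
Proof.
  intros HGs. params_facts Hp.
  assert (0 < (lamfTmax p - lamfTmin p) * pp p) by (apply Rmult_lt_0_compat; lra).
  assert (0 < lamfTmax p * (3 * Gs) / (alpha p * alpha p))
    by (apply Rdiv_lt_0_compat; [apply Rmult_lt_0_compat|]; lra).
  unfold fire_rate_lipschitz; lra.
Qed.

Lemma fire_rate_drop_le Gs G T r : 0 < Gs ->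
  Rabs (G - Gs) < r -> Rabs T < r -> r <= Gs / 2 ->
  lamfTmax p * omega p Gs - vartheta p T * omega p G <= r * fire_rate_lipschitz Gs.
Proof.
  intros HGs HG HT Hr.
  pose proof Hp as (_ & _ & _ & _ & _ & _ & _ & _ & _ & _ & _ & _ & _ & _ &
                    _ & HlamTmax & Hpp & Halpha & Hlam).
  set (Cp := (lamfTmax p - lamfTmin p) * pp p).
  assert (HCp : 0 < Cp) by (apply Rmult_lt_0_compat; lra).
  pose proof (omega_nonneg G). pose proof (omega_le_1 G).
  assert (vartheta_drop : (lamfTmax p - vartheta p T) * omega p G <= Cp * r).
  { pose proof (vartheta_ge_max_sub T) as Hth. fold Cp in Hth.
    assert (0 <= Cp * Rabs T) by (apply Rmult_le_pos; [lra | apply Rabs_pos]).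
    apply Rle_trans with (Cp * Rabs T * omega p G); [apply Rmult_le_compat_r; lra|].
    apply Rle_trans with (Cp * Rabs T); [|apply Rmult_le_compat_l; lra].
    rewrite <- (Rmult_1_r (Cp * Rabs T)) at 2. apply Rmult_le_compat_l; lra. }
  assert (omega_drop : omega p Gs - omega p G <= r * (3 * Gs) / (alpha p * alpha p)).
  { apply Rle_trans with (1 := omega_sub_le Gs G).
    unfold Rdiv. apply Rmult_le_compat_r; [left; apply Rinv_0_lt_compat, alpha2_pos|].
    pose proof (Rabs_def2 _ _ HG).
    replace (Gs * Gs - G * G) with (- (G - Gs) * (G + Gs)) by ring.
    rewrite Rabs_mult, Rabs_Ropp, (Rabs_pos_eq (G + Gs)) by lra.
    apply Rmult_le_compat; lra || apply Rabs_pos. }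
  assert (lamfTmax p * (omega p Gs - omega p G)
          <= lamfTmax p * (r * (3 * Gs) / (alpha p * alpha p)))
    by (apply Rmult_le_compat_l; lra).
  unfold fire_rate_lipschitz. fold Cp.
  replace (r * (Cp + lamfTmax p * (3 * Gs) / (alpha p * alpha p)))
    with (Cp * r + lamfTmax p * (r * (3 * Gs) / (alpha p * alpha p))) by (field; lra).
  lra.
Qed.

End Saturations.

Lemma Gstar_spec p W f : params_pos p -> 0 < W -> 0 < f -> 1 < R2W p W f ->
  0 < Gstar p W f /\ g_G p W - crowdG p W * Gstar p W f = deltaG p + lamfG p * f.
Proof.
  intros Hp HW Hf HR2. params_facts Hp.
  apply logistic_equilibrium; [apply K_G_pos; exact Hp | nra | exact HR2].
Qed.

Lemma Tstar_spec p W : params_pos p -> 0 < W -> 1 < R1W p W ->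
  0 < Tstar p W /\ g_T p W - crowdT p W * Tstar p W = deltaT p.
Proof.
  intros Hp HW HR1. params_facts Hp.
  apply logistic_equilibrium; [apply K_T_pos; exact Hp | lra | exact HR1].
Qed.

Definition grass_invasion_rate (p : params) (W f : R) : R :=
  g_G p W - deltaG p - lamfG p * f - etaTG p * Tstar p W.
Definition tree_invasion_rate (p : params) (W f : R) : R :=
  g_T p W - deltaT p - lamfTmax p * f * omega p (Gstar p W f).

Lemma grass_invasion_rate_neg p W f : params_pos p -> 0 < W -> 0 < f ->
  1 < R1W p W -> R_F p W f < 1 -> grass_invasion_rate p W f < 0.
Proof.
  intros Hp HW Hf HR1 HRF. params_facts Hp.
  destruct (Tstar_spec p W Hp HW HR1) as [HTs _].
  apply (div_lt_1_iff (g_G p W) (etaTG p * Tstar p W + deltaG p + lamfG p * f)) in HRF;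
    [unfold grass_invasion_rate; lra | nra].
Qed.

Lemma tree_invasion_rate_neg p W f : params_pos p -> 0 < f ->
  R_G p W f < 1 -> tree_invasion_rate p W f < 0.
Proof.
  intros Hp Hf HRG. params_facts Hp.
  pose proof (omega_nonneg p Hp (Gstar p W f)).
  assert (0 <= lamfTmax p * f * omega p (Gstar p W f)) by (apply Rmult_le_pos; nra).
  apply (div_lt_1_iff (g_T p W) (deltaT p + lamfTmax p * f * omega p (Gstar p W f))) in HRG;
    [unfold tree_invasion_rate|]; lra.
Qed.

Lemma desert_equilibrium p W f : is_equilibrium p W f 0 0.
Proof. split; unfold F_G, F_T; ring. Qed.

Lemma grassland_equilibrium p W f : params_pos p -> 0 < W -> 0 < f -> 1 < R2W p W f ->
  is_equilibrium p W f (Gstar p W f) 0.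
Proof.
  intros Hp HW Hf HR2. destruct (Gstar_spec p W f Hp HW Hf HR2) as [_ Gs_eq].
  split; [|unfold F_T; ring].
  rewrite (F_G_factor p W f Hp). apply Rmult_eq_0_compat_l. lra.
Qed.

Lemma forest_equilibrium p W f : params_pos p -> 0 < W -> 1 < R1W p W ->
  is_equilibrium p W f 0 (Tstar p W).
Proof.
  intros Hp HW HR1. destruct (Tstar_spec p W Hp HW HR1) as [_ Ts_eq].
  split; [unfold F_G; ring|].
  rewrite (F_T_factor p W f Hp), omega_0. apply Rmult_eq_0_compat_l. lra.
Qed.

(** * Local estimates near the equilibria *)

Lemma quadratic_dissipation A B a b c d k x y u v :
  0 <= A -> 0 <= B ->
  2 * x * u <= - a * (x * x) + c * (y * y) ->
  2 * y * v <= - b * (y * y) + d * (x * x) ->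
  k * A <= A * a - B * d -> k * B <= B * b - A * c ->
  2 * A * x * u + 2 * B * y * v <= - k * (A * (x * x) + B * (y * y)).
Proof.
  intros HA HB Hx Hy Hka Hkb.
  pose proof (Rle_0_sqr x). pose proof (Rle_0_sqr y). unfold Rsqr in *.
  assert (A * (2 * x * u) <= A * (- a * (x * x) + c * (y * y)))
    by (apply Rmult_le_compat_l; assumption).
  assert (B * (2 * y * v) <= B * (- b * (y * y) + d * (x * x)))
    by (apply Rmult_le_compat_l; assumption).
  assert (x * x * (k * A) <= x * x * (A * a - B * d)) by (apply Rmult_le_compat_l; assumption).
  assert (y * y * (k * B) <= y * y * (B * b - A * c)) by (apply Rmult_le_compat_l; assumption).
  lra.
Qed.

Lemma cross_term_le c e x y : 0 < c ->
  - (2 * e * x * y) <= c * (x * x) + e * e / c * (y * y).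
Proof.
  intros Hc.
  assert (0 <= (c * x + e * y) * (c * x + e * y) / c)
    by (apply Rmult_le_pos; [apply Rle_0_sqr | left; apply Rinv_0_lt_compat; lra]).
  replace (c * (x * x) + e * e / c * (y * y))
    with ((c * x + e * y) * (c * x + e * y) / c - 2 * e * x * y) by (field; lra).
  lra.
Qed.

Lemma exists_radius L1 L2 e1 e2 : 0 <= L1 -> 0 <= L2 -> 0 < e1 -> 0 < e2 ->
  exists r, 0 < r /\ r * L1 <= e1 /\ r * L2 <= e2.
Proof.
  intros HL1 HL2 He1 He2.
  exists (Rmin (e1 / (L1 + 1)) (e2 / (L2 + 1))).
  pose proof (Rmin_l (e1 / (L1 + 1)) (e2 / (L2 + 1))).
  pose proof (Rmin_r (e1 / (L1 + 1)) (e2 / (L2 + 1))).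
  assert (e1 / (L1 + 1) * (L1 + 1) = e1) by (field; lra).
  assert (e2 / (L2 + 1) * (L2 + 1) = e2) by (field; lra).
  split; [apply Rmin_pos; apply Rdiv_lt_0_compat; lra | split; nra].
Qed.

Section Terms.
Variables (p : params) (W f G T r : R).
Hypotheses (Hp : params_pos p) (HW : 0 < W) (Hf : 0 < f).

Let Heta : 0 < etaTG p.
Proof. params_facts Hp. assumption. Qed.

Lemma desert_grass_term : Rabs G < r -> Rabs T < r ->
  2 * G * F_G p W f G T
  <= 2 * (g_G p W - deltaG p - lamfG p * f + (crowdG p W + etaTG p) * r) * (G * G).
Proof.
  intros HG HT. apply Rabs_def2 in HG. apply Rabs_def2 in HT.
  pose proof (crowdG_pos p W Hp HW).
  assert (- (etaTG p * T) <= etaTG p * r) by nra.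
  assert (- (crowdG p W * G) <= crowdG p W * r) by nra.
  assert (G * G * (g_G p W - deltaG p - lamfG p * f - etaTG p * T - crowdG p W * G)
          <= G * G * (g_G p W - deltaG p - lamfG p * f + (crowdG p W + etaTG p) * r))
    by (apply Rmult_le_compat_l; [apply Rle_0_sqr | lra]).
  rewrite (F_G_factor p W f Hp). lra.
Qed.

Lemma desert_tree_term : Rabs T < r ->
  2 * T * F_T p W f G T <= 2 * (g_T p W - deltaT p + crowdT p W * r) * (T * T).
Proof.
  intros HT. apply Rabs_def2 in HT.
  pose proof (crowdT_pos p W Hp HW).
  pose proof (vartheta_pos p Hp T). pose proof (omega_nonneg p Hp G).
  assert (0 <= f * vartheta p T * omega p G) by (apply Rmult_le_pos; nra).
  assert (- (crowdT p W * T) <= crowdT p W * r) by nra.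
  assert (T * T * (g_T p W - deltaT p - crowdT p W * T - f * vartheta p T * omega p G)
          <= T * T * (g_T p W - deltaT p + crowdT p W * r))
    by (apply Rmult_le_compat_l; [apply Rle_0_sqr | lra]).
  rewrite (F_T_factor p W f Hp). lra.
Qed.

Lemma forest_grass_term : Rabs G < r -> Rabs (T - Tstar p W) < r ->
  2 * G * F_G p W f G T
  <= 2 * (grass_invasion_rate p W f + (crowdG p W + etaTG p) * r) * (G * G).
Proof.
  intros HG HT. apply Rabs_def2 in HG. apply Rabs_def2 in HT.
  pose proof (crowdG_pos p W Hp HW).
  assert (- (etaTG p * (T - Tstar p W)) <= etaTG p * r) by nra.
  assert (- (crowdG p W * G) <= crowdG p W * r) by nra.
  assert (G * G * (g_G p W - deltaG p - lamfG p * f - etaTG p * T - crowdG p W * G)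
          <= G * G * (grass_invasion_rate p W f + (crowdG p W + etaTG p) * r))
    by (apply Rmult_le_compat_l; [apply Rle_0_sqr | unfold grass_invasion_rate; lra]).
  rewrite (F_G_factor p W f Hp). lra.
Qed.

Lemma forest_tree_term : 1 < R1W p W -> Rabs (T - Tstar p W) < r -> r <= Tstar p W / 2 ->
  2 * (T - Tstar p W) * F_T p W f G T
  <= - (crowdT p W * Tstar p W) * ((T - Tstar p W) * (T - Tstar p W))
     + 3 * f * lamfTmax p * Tstar p W / (alpha p * alpha p) * r * (G * G).
Proof.
  intros HR1 HT Hr. apply Rabs_def2 in HT.
  destruct (Tstar_spec p W Hp HW HR1) as [HTs Ts_eq].
  pose proof (crowdT_pos p W Hp HW) as Hc2.
  pose proof Hp as (_ & _ & _ & _ & _ & _ & _ & _ & _ & _ & _ & _ & _ & _ &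
                    _ & HlamTmax & _ & Halpha & _).
  set (Ts := Tstar p W) in *. set (y := T - Ts) in *.
  assert (HT_range : Ts / 2 <= T <= 3 * Ts / 2) by (unfold y in HT; lra).
  destruct (fire_rate_bounds p Hp G T ltac:(lra)) as [Hfire0 Hfire1].
  set (z := f * (vartheta p T * omega p G) * T).
  assert (Hz0 : 0 <= z) by (apply Rmult_le_pos; [apply Rmult_le_pos|]; lra).
  assert (Hz1 : z <= f * (lamfTmax p * (G * G / (alpha p * alpha p))) * (3 * Ts / 2)).
  { apply Rmult_le_compat; try lra; [apply Rmult_le_pos; lra|].
    apply Rmult_le_compat_l; lra. }
  assert (coupling : - (2 * z * y)
                     <= 3 * f * lamfTmax p * Ts / (alpha p * alpha p) * r * (G * G)).
  { assert (- (z * y) <= z * r) by nra.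
    replace (3 * f * lamfTmax p * Ts / (alpha p * alpha p) * r * (G * G))
      with (2 * (f * (lamfTmax p * (G * G / (alpha p * alpha p))) * (3 * Ts / 2)) * r)
      by (field; lra).
    assert (z * r <= f * (lamfTmax p * (G * G / (alpha p * alpha p))) * (3 * Ts / 2) * r)
      by (apply Rmult_le_compat_r; lra).
    lra. }
  assert (damping : y * y * (crowdT p W * Ts) <= y * y * (2 * (crowdT p W * T)))
    by (apply Rmult_le_compat_l; [apply Rle_0_sqr | nra]).
  rewrite (F_T_factor p W f Hp).
  replace (g_T p W - deltaT p - crowdT p W * T) with (- crowdT p W * y) by (unfold y; lra).
  replace (2 * y * (T * (- crowdT p W * y - f * vartheta p T * omega p G)))
    with (- (y * y * (2 * (crowdT p W * T))) - 2 * z * y) by (unfold z; ring).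
  lra.
Qed.

Lemma grassland_grass_term : 1 < R2W p W f ->
  Rabs (G - Gstar p W f) < r -> r <= Gstar p W f / 2 ->
  2 * (G - Gstar p W f) * F_G p W f G T
  <= - (crowdG p W * Gstar p W f / 2) * ((G - Gstar p W f) * (G - Gstar p W f))
     + 3 * Gstar p W f * (etaTG p * etaTG p) / (2 * crowdG p W) * (T * T).
Proof.
  intros HR2 HG Hr. apply Rabs_def2 in HG.
  destruct (Gstar_spec p W f Hp HW Hf HR2) as [HGs Gs_eq].
  pose proof (crowdG_pos p W Hp HW) as Hc1.
  set (Gs := Gstar p W f) in *. set (c1 := crowdG p W) in *. set (x := G - Gs) in *.
  assert (HG_range : Gs / 2 <= G <= 3 * Gs / 2) by (unfold x in HG; lra).
  pose proof (Rle_0_sqr x). pose proof (Rle_0_sqr T). unfold Rsqr in *.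
  assert (cross : G * - (2 * etaTG p * x * T)
                  <= G * (c1 * (x * x) + etaTG p * etaTG p / c1 * (T * T)))
    by (apply Rmult_le_compat_l; [lra | apply cross_term_le, Hc1]).
  assert (G * (etaTG p * etaTG p / c1 * (T * T))
          <= 3 * Gs * (etaTG p * etaTG p) / (2 * c1) * (T * T)).
  { replace (3 * Gs * (etaTG p * etaTG p) / (2 * c1) * (T * T))
      with (3 * Gs / 2 * (etaTG p * etaTG p / c1 * (T * T))) by (field; lra).
    apply Rmult_le_compat_r; [|lra].
    apply Rmult_le_pos; [|lra].
    apply Rmult_le_pos; [nra | left; apply Rinv_0_lt_compat, Hc1]. }
  assert (c1 * (x * x) * (Gs / 2) <= c1 * (x * x) * G)
    by (apply Rmult_le_compat_l; [apply Rmult_le_pos|]; lra).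
  rewrite (F_G_factor p W f Hp). fold c1.
  replace (g_G p W - deltaG p - lamfG p * f - etaTG p * T - c1 * G)
    with (- c1 * x - etaTG p * T) by (unfold x; lra).
  lra.
Qed.

Lemma grassland_tree_term : 1 < R2W p W f ->
  Rabs (G - Gstar p W f) < r -> Rabs T < r -> r <= Gstar p W f / 2 ->
  2 * T * F_T p W f G T
  <= 2 * (tree_invasion_rate p W f
          + (crowdT p W + f * fire_rate_lipschitz p (Gstar p W f)) * r) * (T * T).
Proof.
  intros HR2 HG HT Hr.
  destruct (Gstar_spec p W f Hp HW Hf HR2) as [HGs _].
  pose proof (fire_rate_drop_le p Hp _ G T r HGs HG HT Hr) as Hfire.
  apply Rabs_def2 in HT.
  pose proof (crowdT_pos p W Hp HW).
  assert (f * (lamfTmax p * omega p (Gstar p W f) - vartheta p T * omega p G)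
          <= f * (r * fire_rate_lipschitz p (Gstar p W f)))
    by (apply Rmult_le_compat_l; lra).
  assert (- (crowdT p W * T) <= crowdT p W * r) by nra.
  assert (T * T * (g_T p W - deltaT p - crowdT p W * T - f * vartheta p T * omega p G)
          <= T * T * (tree_invasion_rate p W f
                      + (crowdT p W + f * fire_rate_lipschitz p (Gstar p W f)) * r))
    by (apply Rmult_le_compat_l; [apply Rle_0_sqr | unfold tree_invasion_rate; lra]).
  rewrite (F_T_factor p W f Hp). lra.
Qed.

End Terms.

Lemma desert_lyapunov p W f : params_pos p -> 0 < W -> 0 < f ->
  R1W p W < 1 -> R2W p W f < 1 -> exists r k, quadratic_lyapunov p W f 0 0 1 1 r k.
Proof.
  intros Hp HW Hf HR1 HR2.
  pose proof Hp as (_ & _ & _ & _ & _ & _ & _ & _ & _ & _ & HdeltaG & HdeltaT & Heta & HlamG & _).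
  pose proof (crowdG_pos p W Hp HW). pose proof (crowdT_pos p W Hp HW).
  set (a := g_G p W - deltaG p - lamfG p * f). set (b := g_T p W - deltaT p).
  assert (Ha : a < 0).
  { apply (div_lt_1_iff (g_G p W) (deltaG p + lamfG p * f)) in HR2; [unfold a; lra | nra]. }
  assert (Hb : b < 0).
  { apply (div_lt_1_iff (g_T p W) (deltaT p)) in HR1; [unfold b|]; lra. }
  destruct (exists_radius (crowdG p W + etaTG p) (crowdT p W) (- a / 2) (- b / 2))
    as (r & Hr & HrG & HrT); try lra.
  set (k := Rmin (- a) (- b)).
  assert (k <= - a) by apply Rmin_l. assert (k <= - b) by apply Rmin_r.
  exists r, k. repeat split; try lra; [apply Rmin_pos; lra|].
  intros G T HG HT. rewrite !Rminus_0_r in *.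
  pose proof (desert_grass_term p W f G T r Hp HW HG HT) as Hgrass.
  pose proof (desert_tree_term p W f G T r Hp HW Hf HT) as Htree.
  (* [lra] does not see through local definitions, so they are made opaque first. *)
  fold a in Hgrass. fold b in Htree. clearbody k a b.
  apply (quadratic_dissipation 1 1 (- 2 * (a + (crowdG p W + etaTG p) * r))
                               (- 2 * (b + crowdT p W * r)) 0 0); lra.
Qed.

Lemma forest_lyapunov p W f : params_pos p -> 0 < W -> 0 < f ->
  1 < R1W p W -> R_F p W f < 1 ->
  exists r k, quadratic_lyapunov p W f 0 (Tstar p W) 1 1 r k.
Proof.
  intros Hp HW Hf HR1 HRF.
  pose proof Hp as (_ & _ & _ & _ & _ & _ & _ & _ & _ & _ & _ & _ & Heta & _ &
                    _ & HlamTmax & _ & Halpha & _).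
  pose proof (crowdG_pos p W Hp HW). pose proof (crowdT_pos p W Hp HW).
  destruct (Tstar_spec p W Hp HW HR1) as [HTs _].
  pose proof (grass_invasion_rate_neg p W f Hp HW Hf HR1 HRF) as Ha.
  set (a := grass_invasion_rate p W f) in *. set (Ts := Tstar p W) in *.
  set (Q := 3 * f * lamfTmax p * Ts / (alpha p * alpha p)).
  assert (HQ : 0 < Q)
    by (apply Rdiv_lt_0_compat; [apply Rmult_lt_0_compat; [nra | lra] | nra]).
  destruct (exists_radius (2 * (crowdG p W + etaTG p) + Q) 1 (- a) (Ts / 2))
    as (r & Hr & HrG & HrT); try lra.
  set (k := Rmin (- a) (crowdT p W * Ts)).
  assert (k <= - a) by apply Rmin_l. assert (k <= crowdT p W * Ts) by apply Rmin_r.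
  exists r, k. repeat split; try lra; [apply Rmin_pos; nra|].
  intros G T HG HT. rewrite !Rminus_0_r in *.
  pose proof (forest_grass_term p W f G T r Hp HW HG HT) as Hgrass.
  assert (Hr_Ts : r <= Ts / 2) by lra.
  pose proof (forest_tree_term p W f G T r Hp HW Hf HR1 HT Hr_Ts) as Htree.
  fold a Ts Q in Hgrass. fold a Ts Q in Htree. clearbody k Q a Ts.
  apply (quadratic_dissipation 1 1 (- 2 * (a + (crowdG p W + etaTG p) * r))
                               (crowdT p W * Ts) 0 (Q * r)); lra.
Qed.

Lemma grassland_lyapunov p W f : params_pos p -> 0 < W -> 0 < f ->
  1 < R2W p W f -> R_G p W f < 1 ->
  exists B r k, quadratic_lyapunov p W f (Gstar p W f) 0 1 B r k.
Proof.
  intros Hp HW Hf HR2 HRG.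
  pose proof Hp as (_ & _ & _ & _ & _ & _ & _ & _ & _ & _ & _ & _ & Heta & _).
  pose proof (crowdG_pos p W Hp HW) as Hc1. pose proof (crowdT_pos p W Hp HW).
  destruct (Gstar_spec p W f Hp HW Hf HR2) as [HGs _].
  pose proof (tree_invasion_rate_neg p W f Hp Hf HRG) as Hb.
  pose proof (fire_rate_lipschitz_pos p Hp _ HGs).
  set (b := tree_invasion_rate p W f) in *. set (Gs := Gstar p W f) in *.
  set (P := 3 * Gs * (etaTG p * etaTG p) / (2 * crowdG p W)).
  assert (HP : 0 < P) by (apply Rdiv_lt_0_compat; [apply Rmult_lt_0_compat|]; nra).
  (* The weight B makes the tree damping B (-b) T^2 twice the AM-GM cross term P T^2. *)
  set (B := 2 * P / - b).
  assert (HB : 0 < B) by (apply Rdiv_lt_0_compat; lra).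
  assert (HBb : B * - b = 2 * P) by (unfold B; field; lra).
  destruct (exists_radius 1 (crowdT p W + f * fire_rate_lipschitz p Gs) (Gs / 2) (- b / 2))
    as (r & Hr & HrG & HrT); try nra.
  set (k := Rmin (crowdG p W * Gs / 2) (- b / 2)).
  assert (k <= crowdG p W * Gs / 2) by apply Rmin_l. assert (k <= - b / 2) by apply Rmin_r.
  exists B, r, k. repeat split; try lra; [apply Rmin_pos; nra|].
  intros G T HG HT. rewrite !Rminus_0_r in *.
  assert (Hr_Gs : r <= Gs / 2) by lra.
  pose proof (grassland_grass_term p W f G T r Hp HW Hf HR2 HG Hr_Gs) as Hgrass.
  pose proof (grassland_tree_term p W f G T r Hp HW Hf HR2 HG HT Hr_Gs) as Htree.
  fold b Gs P in Hgrass. fold b Gs P in Htree. clearbody k B P b Gs.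
  set (beta := - 2 * (b + (crowdT p W + f * fire_rate_lipschitz p Gs) * r)).
  assert (B * (- b) <= B * beta) by (apply Rmult_le_compat_l; unfold beta; lra).
  assert (B * k <= B * (- b / 2)) by (apply Rmult_le_compat_l; lra).
  apply (quadratic_dissipation 1 B (crowdG p W * Gs / 2) beta P 0); unfold beta in *; lra.
Qed.
Theorem theorem2 (p : params) (W f : R) :
  params_pos p -> 0 < W -> 0 < f ->
  (R1W p W < 1 -> R2W p W f < 1 ->
     is_equilibrium p W f 0 0 /\ loc_asym_stable p W f 0 0) /\
  (1 < R2W p W f -> R_G p W f < 1 ->
     is_equilibrium p W f (Gstar p W f) 0 /\
     loc_asym_stable p W f (Gstar p W f) 0) /\
  (1 < R1W p W -> R_F p W f < 1 ->
     is_equilibrium p W f 0 (Tstar p W) /\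
     loc_asym_stable p W f 0 (Tstar p W)).
Proof.
  intros Hp HW Hf. split; [|split].
  - intros HR1 HR2. split; [apply desert_equilibrium|].
    destruct (desert_lyapunov p W f Hp HW Hf HR1 HR2) as (r & k & Hlyap).
    exact (loc_asym_stable_of_lyapunov Hlyap).
  - intros HR2 HRG. split; [exact (grassland_equilibrium p W f Hp HW Hf HR2)|].
    destruct (grassland_lyapunov p W f Hp HW Hf HR2 HRG) as (B & r & k & Hlyap).
    exact (loc_asym_stable_of_lyapunov Hlyap).
  - intros HR1 HRF. split; [exact (forest_equilibrium p W f Hp HW HR1)|].
    destruct (forest_lyapunov p W f Hp HW Hf HR1 HRF) as (r & k & Hlyap).
    exact (loc_asym_stable_of_lyapunov Hlyap).
Qed.
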